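(* Let $L_*\ge3$ and let $\{G_n\}_{n\in\mathbb N}$ be the replacement graphs of the iterated graph system $\mathfrak R(1,L_* )$. Then for every $m>1$, every non-collapsing path in $G_m$ contains at most two distinct vertices.
   Context: Graphs: $(V,E)$, $V$ finite non-empty, $E\subseteq V\times V$, $(x,y)\in E\Rightarrow(y,x)\notin E$; $\{x,y\}\in E$ means either orientation; a path is a sequence $[x_1,\dots,x_k]$ with $\{x_i,x_{i+1}\}\in E$. An iterated graph system consists of a connected graph $G_1=(S,E)$, a finite set $\mathcal T$ of types, a surjective typing $\mathfrak t:E\to\mathcal T$ and non-empty gluing rules $I_t\subseteq S\times S$. With $W_m=S^m$, $[w]_k=w_1\cdots w_k$ and $|w\wedge v|=\min\{k:[w]_k\ne[v]_k\}$ for distinct words of equal length, the replacement graphs $G_m=(W_m,E_m)$ are defined recursively: $(w,v)\in E_{m+1}$ iff either (1) $[w]_m=[v]_m$ and $(w_{m+1},v_{m+1})\in E$ (type $\mathfrak t(w_{m+1},v_{m+1})$), or (2) $([w]_m,[v]_m)\in E_m$ and $(w_{m+1},v_{m+1})\in I_{\mathfrak t([w]_m,[v]_m)}$ (type $\mathfrak t([w]_m,[v]_m)$). The system $\mathfrak R(1,L_* )$ has $S=\{1,\dots,L_*\}$, a single type $t_1$, edges $E=\{(k,k+1):1\le k<L_*\}$ all of type $t_1$, and $I_{t_1}=\{(L_*,1)\}$. For $n>1$, a path $[w^{(1)},\dots,w^{(k)}]$ in $G_n$ is non-collapsing if $|w^{(i)}\wedge w^{(i+1)}|<n$ for all $i=1,\dots,k-1$.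 *)

From mathcomp Require Import all_boot.
Set Implicit Arguments. Unset Strict Implicit. Unset Printing Implicit Defensive.

Section IGS.
Variables (S : eqType) (T : Type).
Variables (alph : seq S) (E : rel S) (typ : S -> S -> T) (I : T -> rel S).

Definition igs_vertex (m : nat) (w : seq S) : bool :=
  (size w == m) && all (fun a => a \in alph) w.

(* E_0 is empty (G_0 is the single empty word); the recursion at m = 0
   therefore yields exactly G_1 = (S, E) with typing typ.  For m.+1:
   rule (1): same m-prefix and (w_{m+1}, v_{m+1}) in E (type typ ..);
   rule (2): (prefix w, prefix v) in E_m with type t and
             (w_{m+1}, v_{m+1}) in I_t (type t). *)
Fixpoint igs_edge (m : nat) (w v : seq S) : option T :=
  match m with
  | 0 => None
  | m'.+1 =>
    match drop m' w, drop m' v with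
    | [:: a], [:: b] =>
        if (take m' w == take m' v) && E a b then Some (typ a b)
        else match igs_edge m' (take m' w) (take m' v) with
             | Some t => if I t a b then Some t else None
             | None => None
             end
    | _, _ => None
    end
  end.

Definition igs_edgeb (m : nat) (w v : seq S) : bool :=
  if igs_edge m w v is Some _ then true else false.

Definition igs_adj (m : nat) (w v : seq S) : bool :=
  igs_edgeb m w v || igs_edgeb m v w.

Definition igs_path (m : nat) (p : seq (seq S)) : Prop :=
  all (igs_vertex m) p /\
  (forall i, i.+1 < size p -> igs_adj m (nth [::] p i) (nth [::] p i.+1)).
End IGS.

Definition wedge {S : eqType} (w v : seq S) : nat :=
  find (fun k => take k w != take k v) (iota 0 (size w).+1).

Definition noncollapsing {S : eqType} (n : nat) (p : seq (seq S)) : Prop :=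
  forall i, i.+1 < size p -> wedge (nth [::] p i) (nth [::] p i.+1) < n.

Definition R1_alph (L : nat) : seq nat := iota 1 L.
Definition R1_E (L : nat) : rel nat := fun a b => (1 <= a) && (a < L) && (b == a.+1).
Definition R1_typ : nat -> nat -> unit := fun _ _ => tt.
Definition R1_I (L : nat) : unit -> rel nat := fun _ a b => (a == L) && (b == 1).

Definition R1_path (L m : nat) (p : seq (seq nat)) : Prop :=
  igs_path (R1_alph L) (R1_E L) R1_typ (R1_I L) m p.

From mathcomp Require Import all_boot.

(* An edge of G_(n+1) of R(1,L) whose endpoints have different n-prefixes can
   only come from the gluing rule: it goes from a word ending in L to a word
   ending in 1, and projects onto an edge of G_n.  Since every vertex of G_n
   has at most one out-neighbour and at most one in-neighbour, and L <> 1, two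
   consecutive non-collapsing steps w - v - x are either both glued into v or
   both glued out of v, which forces x = w.  A non-collapsing path therefore
   alternates between its first two vertices. *)

Lemma wedge_take_neq (S : eqType) (w v : seq S) k :
  k <= size w -> wedge w v <= k -> take k w != take k v.
Proof.
rewrite /wedge => le_k_w le_wedge_k.
set P := fun j => take j w != take j v.
have idx_lt : find P (iota 0 (size w).+1) < (size w).+1.
  by rewrite ltnS (leq_trans le_wedge_k).
have := @nth_find _ 0 P (iota 0 (size w).+1).
rewrite has_find size_iota nth_iota // add0n => /(_ idx_lt).
apply: contra => /eqP eq_take; apply/eqP.
by rewrite -(take_takel _ le_wedge_k) eq_take take_takel.
Qed.

Lemma undup_size_le2_period2 (T : eqType) (x0 : T) (p : seq T) :
  (forall i, i.+2 < size p -> nth x0 p i.+2 = nth x0 p i) ->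
  size (undup p) <= 2.
Proof.
move=> period2.
have nth_odd i : i < size p -> nth x0 p i = nth x0 p (odd i).
  elim/ltn_ind: i => -[|[|i]] IH lt_i_p //=.
  rewrite period2 // IH ?negbK //.
  exact: ltn_trans lt_i_p.
apply: (@leq_trans (size [:: nth x0 p 0; nth x0 p 1])) => //.
apply: uniq_leq_size (undup_uniq p) _ => x; rewrite mem_undup.
case/(nthP x0) => i lt_i_p <-; rewrite nth_odd //.
by case: (odd i); rewrite !inE eqxx ?orbT.
Qed.

Section R1Edges.
Local Set Implicit Arguments.
Local Unset Strict Implicit.

Variable L : nat.

Local Notation edge n w v := (igs_edgeb (R1_E L) R1_typ (R1_I L) n w v).
Local Notation adj n w v := (igs_adj (R1_E L) R1_typ (R1_I L) n w v).

Lemma R1_edgeS n w v : edge n.+1 w v ->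
  exists c d, [/\ drop n w = [:: c], drop n v = [:: d] &
    [/\ take n w = take n v, 0 < c < L & d = c.+1] \/
    [/\ edge n (take n w) (take n v), c = L & d = 1]].
Proof.
rewrite /igs_edgeb /=.
case: (drop n w) => [|c [|? ?]] //; case: (drop n v) => [|d [|? ?]] //.
move=> e_wv; exists c, d; split=> //; move: e_wv.
case: ifP => [/andP[/eqP eq_take] | _].
  by rewrite /R1_E => /andP[c_range /eqP ->] _; left.
case: (igs_edge _ _ _ n _ _) => [t|] //.
by rewrite /R1_I; case: ifP => // /andP[/eqP -> /eqP ->] _; right.
Qed.

Lemma R1_edge_fun n w v1 v2 : edge n w v1 -> edge n w v2 -> v1 = v2.
Proof.
elim: n w v1 v2 => [|n IH] w v1 v2 //.
case/R1_edgeS=> c [d1 [w_c v1_d1 e1]] /R1_edgeS [c' [d2 [w_c' v2_d2 e2]]].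
move: w_c'; rewrite w_c => -[eq_c].
rewrite -(cat_take_drop n v1) -(cat_take_drop n v2) v1_d1 v2_d2.
case: e1 e2 => -[e1 c_lt d1E] [] [e2 c_lt' d2E]; subst.
- by rewrite -e1 -e2.
- by rewrite ltnn andbF in c_lt.
- by rewrite ltnn andbF in c_lt'.
- by rewrite (IH _ _ _ e1 e2).
Qed.

Lemma R1_edge_inj n w1 w2 v : edge n w1 v -> edge n w2 v -> w1 = w2.
Proof.
elim: n w1 w2 v => [|n IH] w1 w2 v //.
case/R1_edgeS=> c1 [d [w1_c1 v_d e1]] /R1_edgeS [c2 [d' [w2_c2 v_d' e2]]].
move: v_d'; rewrite v_d => -[eq_d].
rewrite -(cat_take_drop n w1) -(cat_take_drop n w2) w1_c1 w2_c2.
case: e1 e2 => -[e1 c1_lt dE] [] [e2 c2_lt dE']; subst.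
- by case: dE' => ->; rewrite e1 e2.
- by case: dE' c1_lt => ->.
- by case: dE' c2_lt => <-.
- by rewrite (IH _ _ _ e1 e2).
Qed.

Lemma R1_edge_glue n w v : edge n.+1 w v -> take n w != take n v ->
  [/\ drop n w = [:: L], drop n v = [:: 1] & edge n (take n w) (take n v)].
Proof.
by case/R1_edgeS=> c [d [-> -> [[-> _ _] | [e_wv -> ->]]]]; rewrite ?eqxx.
Qed.

Hypothesis L_neq1 : L != 1.

Lemma R1_adj_glue_backtrack n w v x : adj n.+1 w v -> adj n.+1 v x ->
  take n w != take n v -> take n v != take n x -> w = x.
Proof.
have glue_eq a b : take n a = take n b -> drop n a = drop n b -> a = b.
  move=> eq_take eq_drop.
  by rewrite -(cat_take_drop n a) eq_take eq_drop cat_take_drop.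
case/orP=> e_wv /orP[] e_vx wv_neq vx_neq.
- have [_ v_1 _] := R1_edge_glue e_wv wv_neq.
  have [v_L _ _] := R1_edge_glue e_vx vx_neq.
  by move: L_neq1; rewrite v_L in v_1; case: v_1 => ->.
- rewrite eq_sym in vx_neq.
  have [w_L _ e_wv'] := R1_edge_glue e_wv wv_neq.
  have [x_L _ e_xv'] := R1_edge_glue e_vx vx_neq.
  by apply: glue_eq; [apply: R1_edge_inj e_wv' e_xv' | rewrite w_L x_L].
- rewrite eq_sym in wv_neq.
  have [_ w_1 e_vw'] := R1_edge_glue e_wv wv_neq.
  have [_ x_1 e_vx'] := R1_edge_glue e_vx vx_neq.
  by apply: glue_eq; [apply: R1_edge_fun e_vw' e_vx' | rewrite w_1 x_1].
- rewrite eq_sym in wv_neq; rewrite eq_sym in vx_neq.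
  have [v_L _ _] := R1_edge_glue e_wv wv_neq.
  have [_ v_1 _] := R1_edge_glue e_vx vx_neq.
  by move: L_neq1; rewrite v_L in v_1; case: v_1 => ->.
Qed.

End R1Edges.

Theorem lemma5p6 (L : nat) (HL : 3 <= L) (m : nat) (Hm : 1 < m)
  (p : seq (seq nat)) :
  R1_path L m p -> noncollapsing m p -> size (undup p) <= 2.
Proof.
case: m Hm => [|n] // _ [vert_p adj_p] nc_p.
have L_neq1 : L != 1 by apply: contraTneq HL => ->.
have size_nth i : i < size p -> size (nth [::] p i) = n.+1.
  by move=> lt_i_p; have /andP[/eqP -> _] := all_nthP [::] vert_p i lt_i_p.
have step_glued i : i.+1 < size p ->
    take n (nth [::] p i) != take n (nth [::] p i.+1).
  move=> lt_i_p; apply: wedge_take_neq; last exact: nc_p.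
  by rewrite size_nth // ltnW.
apply: (@undup_size_le2_period2 _ [::]) => i lt_i_p; symmetry.
apply: (R1_adj_glue_backtrack L_neq1 _ (adj_p i.+1 lt_i_p)).
- exact/adj_p/ltnW.
- exact/step_glued/ltnW.
- exact: step_glued.
Qed.
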